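(* Let $\mathbb P$ be an LTF and $n<\omega$. Then: (i) if $T\in\mathbf{LT}$ and $s_0\in 2^n$, then $T(\to s_0)\in\mathbb P$ iff $T\in\mathbf{LC}_n(\mathbb P)$; (ii) if $P\in\mathbf{LC}_n(\mathbb P)$, $s_0\in 2^n$, $S\in\mathbb P$ and $S\subseteq P(\to s_0)$, then there is $Q\in\mathbf{LC}_n(\mathbb P)$ with $Q\subseteq_n P$ and $Q(\to s_0)=S$; (iii) if $P\in\mathbf{LC}_n(\mathbb P)$ and $D\subseteq\mathbb P$ is open dense in $\mathbb P$, then there is $Q\in\mathbf{LC}_n(\mathbb P)$ with $Q\subseteq_n P$ and $Q(\to s)\in D$ for all $s\in 2^n$; (iv) if $P\in\mathbf{LC}_n(\mathbb P)$, $S,T\in\mathbb P$, $s,t\in 2^n$, $S\subseteq P(\to s^\frown 0)$, $T\subseteq P(\to t^\frown 1)$, $\sigma\in 2^{<\omega}$ and $T=\sigma\cdot S$, then there is $Q\in\mathbf{LC}_{n+1}(\mathbb P)$ with $Q\subseteq_{n+1}P$, $Q(\to s^\frown0)\subseteq S$ and $Q(\to t^\frown1)\subseteq T$.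
   Context: Notation. $2^{<\omega}$ is the set of finite binary strings, $\Lambda$ the empty string, $\mathrm{lh}(s)$ the length of $s$, $2^n$ the set of strings of length $n$, $s\subseteq t$ means $t$ extends $s$, $s^\frown t$ concatenation. For strings $s,t$ with $\mathrm{lh}(s)\le\mathrm{lh}(t)$, $s\cdot t$ is the string of length $\mathrm{lh}(t)$ with $(s\cdot t)(k)=t(k)+s(k)\bmod 2$ for $k<\mathrm{lh}(s)$ and $(s\cdot t)(k)=t(k)$ otherwise; if $\mathrm{lh}(s)>\mathrm{lh}(t)$ then $s\cdot t=(s\restriction\mathrm{lh}(t))\cdot t$. For $T\subseteq 2^{<\omega}$, $s\cdot T=\{s\cdot t:t\in T\}$. For a tree $T$ and $s\in T$, $T\upharpoonright s=\{t\in T:s\subseteq t\lor t\subseteq s\}$. A perfect tree is a nonempty tree $T\subseteq 2^{<\omega}$ with no endpoints and no isolated branches; its stem $\mathrm{stem}(T)$ is the largest $s\in T$ with $T=T\upharpoonright s$. A perfect tree $T$ is large, written $T\in\mathbf{LT}$, if there are nonempty strings $q^i_n$ ($n<\omega$, $i=0,1$) with $\mathrm{lh}(q^0_n)=\mathrm{lh}(q^1_n)\ge1$ and $q^i_n(0)=i$, such that $T$ consists exactly of all initial segments of strings $r^\frown q^{i(0)}_0{}^\frown\cdots{}^\frown q^{i(n)}_n$, where $r=\mathrm{stem}(T)$, $n<\omega$, $i(0),\dots,i(n)\in\{0,1\}$. Its splitting levels are $\mathrm{spl}_0(T)=\mathrm{lh}(r)$, $\mathrm{spl}_{n+1}(T)=\mathrm{spl}_n(T)+\mathrm{lh}(q^0_n)$.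 For $T\in\mathbf{LT}$ and $i\in\{0,1\}$, $T(\to i)=T\upharpoonright(\mathrm{stem}(T)^\frown i)$; for $s\in 2^n$ with $n\ge1$, $T(\to s)=(\cdots((T(\to s(0)))(\to s(1)))\cdots)(\to s(n-1))$, and $T(\to\Lambda)=T$. For $S,T\in\mathbf{LT}$ and $n<\omega$, $S\subseteq_n T$ means $S\subseteq T$ and $\mathrm{spl}_k(S)=\mathrm{spl}_k(T)$ for all $k<n$. A large-tree forcing notion (LTF) is a set $\mathbb P\subseteq\mathbf{LT}$ such that $T\upharpoonright u\in\mathbb P$ whenever $u\in T\in\mathbb P$, and $s\cdot T\in\mathbb P$ whenever $T\in\mathbb P$ and $s\in 2^{<\omega}$; it is ordered by inclusion (smaller trees are stronger conditions). A tree $T\in\mathbf{LT}$ is an $n$-collage over $\mathbb P$ if $T(\to s)\in\mathbb P$ for all $s\in 2^n$; $\mathbf{LC}_n(\mathbb P)$ denotes the set of such trees. *)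

From mathcomp Require Import all_boot.
Set Implicit Arguments. Unset Strict Implicit. Unset Printing Implicit Defensive.

Definition str := seq bool.
Definition tree := str -> Prop.

(* s ⊆ t  (t extends s) is [prefix s t]. *)
Definition comparable (s t : str) : bool := prefix s t || prefix t s.

Definition sdot (s t : str) : str :=
  mkseq (fun k => nth false t k (+) nth false s k) (size t).

Definition sdotT (s : str) (T : tree) : tree :=
  fun u => exists t, T t /\ u = sdot s t.

Definition subtree (S T : tree) : Prop := forall t, S t -> T t.

Definition restr (T : tree) (u : str) : tree :=
  fun t => T t /\ comparable u t.

Definition is_tree (T : tree) : Prop :=
  (exists t, T t) /\ (forall s t, T t -> prefix s t -> T s).

Definition perfect_tree (T : tree) : Prop :=
  is_tree T /\
  (forall t, T t -> exists b, T (rcons t b)) /\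
  (forall t, T t -> exists u, prefix t u /\ T (rcons u false) /\ T (rcons u true)).

(* stem(T): the largest s ∈ T with T = T ↾ s *)
Definition is_stem (T : tree) (r : str) : Prop :=
  T r /\ (forall t, T t -> comparable r t) /\
  (forall s, T s -> (forall t, T t -> comparable s t) -> prefix s r).

Definition blocks (q0 q1 : nat -> str) (i : nat -> bool) (m : nat) : str :=
  flatten [seq (if i k then q1 k else q0 k) | k <- iota 0 m.+1].

Definition valid_q (q0 q1 : nat -> str) : Prop :=
  forall k, size (q0 k) = size (q1 k) /\ 1 <= size (q0 k) /\
            nth true (q0 k) 0 = false /\ nth false (q1 k) 0 = true.

Definition LT_rep (T : tree) (r : str) (q0 q1 : nat -> str) : Prop :=
  perfect_tree T /\ is_stem T r /\ valid_q q0 q1 /\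
  (forall t, T t <-> exists m i, prefix t (r ++ blocks q0 q1 i m)).

Definition LT (T : tree) : Prop := exists r q0 q1, LT_rep T r q0 q1.

Definition is_spl (T : tree) (k l : nat) : Prop :=
  exists r q0 q1, LT_rep T r q0 q1 /\
    l = size r + sumn [seq size (q0 j) | j <- iota 0 k].

Definition to1 (T : tree) (i : bool) : tree :=
  fun t => T t /\ exists r, is_stem T r /\ comparable (rcons r i) t.

Definition to (T : tree) (s : str) : tree := foldl to1 T s.

Definition sub_n (n : nat) (S T : tree) : Prop :=
  subtree S T /\ forall k, k < n -> exists l, is_spl S k l /\ is_spl T k l.

Definition LTF (PP : tree -> Prop) : Prop :=
  (forall T, PP T -> LT T) /\
  (forall T u, PP T -> T u -> PP (restr T u)) /\
  (forall T s, PP T -> PP (sdotT s T)).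

Definition LC (n : nat) (PP : tree -> Prop) (T : tree) : Prop :=
  LT T /\ forall s : str, size s = n -> PP (to T s).

(* D ⊆ PP is open dense in PP (order: inclusion, smaller = stronger) *)
Definition open_dense (PP D : tree -> Prop) : Prop :=
  (forall T, D T -> PP T) /\
  (forall S T, D T -> PP S -> subtree S T -> D S) /\
  (forall T, PP T -> exists S, D S /\ subtree S T).

From Pilot Require Import Defs.
From mathcomp Require Import all_boot.
From Stdlib Require Import FunctionalExtensionality PropExtensionality.
Set Implicit Arguments. Unset Strict Implicit. Unset Printing Implicit Defensive.

(* Every large tree is [ltree r q0 q1]: the initial segments of the strings
   [r ++ q^{i 0}_0 ++ ... ++ q^{i (m-1)}_(m-1)].  Its cone [T(-> s)] is again
   such a tree, with stem [r ++ branch q0 q1 s] and codes shifted by [size s],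
   so two cones of the same level differ only in their stems, which have equal
   length: each is the translate of the other by [sdot] of the two stems.  As
   an LTF is closed under translation this gives (i).  For (ii)-(iv) a large
   subtree [ltree (r ++ branch (rcons u c) ++ z_c) p0 p1] of a cone of level
   [m+1] is copied into every cone of that level by appending [z_c] to the
   codes [q^c_m] and continuing with the codes [p0], [p1]; the splitting levels
   below [m+1] are untouched.  (iii) repeats (ii) for each of the [2^n] cones,
   and (iv) glues different extensions [z_0], [z_1] for the two halves, after
   shrinking [S] so that its stem is at least as long as [sigma]. *)

Local Notation comparable := Defs.comparable.

Lemma prefix_nthP (s t : str) : prefix s t <->
  size s <= size t /\ (forall i, i < size s -> nth false s i = nth false t i).
Proof.
split.
- move/prefixP=> [w ->]; rewrite size_cat leq_addr; split=> // i Hi.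
  by rewrite nth_cat Hi.
- move=> [le_st eq_st]; rewrite prefixE; apply/eqP.
  apply: (eq_from_nth (x0 := false)); first by rewrite size_take_min; apply/minn_idPl.
  move=> i; rewrite size_take_min => /leq_trans/(_ (geq_minl _ _)) Hi.
  by rewrite nth_take // eq_st.
Qed.

Lemma prefix_comparable (s t u : str) : prefix s u -> prefix t u -> comparable s t.
Proof.
move=> /prefix_nthP [le_su eq_su] /prefix_nthP [le_tu eq_tu]; rewrite /comparable.
case: (leqP (size s) (size t)) => Hst; apply/orP; [left | right]; apply/prefix_nthP.
- split=> // i Hi; rewrite eq_su // eq_tu //; exact: leq_trans Hi Hst.
- split; first exact: ltnW.
  move=> i Hi; rewrite eq_su ?eq_tu //; exact: ltn_trans Hi Hst.
Qed.

Lemma comparable_sym (s t : str) : comparable s t -> comparable t s.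
Proof. by rewrite /comparable orbC. Qed.

Lemma comparable_nth (s t : str) i : comparable s t -> i < size s -> i < size t ->
  nth false s i = nth false t i.
Proof. by case/orP => /prefix_nthP [_ eq_st] Hs Ht; rewrite eq_st. Qed.

Lemma comparable_prefix (s t : str) : comparable s t -> size s <= size t -> prefix s t.
Proof.
case/orP => // /prefix_nthP [le_ts eq_ts] le_st.
have Est : size s = size t by apply/eqP; rewrite eqn_leq le_st le_ts.
by apply/prefix_nthP; split=> // i Hi; rewrite eq_ts // -Est.
Qed.

Lemma prefix_anti (s t : str) : prefix s t -> prefix t s -> s = t.
Proof.
move=> /prefix_nthP [le_st eq_st] /prefix_nthP [le_ts _].
apply: (eq_from_nth (x0 := false)) => [|i Hi]; last exact: eq_st.
by apply/eqP; rewrite eqn_leq le_st le_ts.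
Qed.

Lemma prefix_rcons_nth (t u : str) : prefix t u -> size t < size u ->
  prefix (rcons t (nth false u (size t))) u.
Proof.
move=> /prefix_nthP [_ eq_tu] lt_tu; apply/prefix_nthP; rewrite size_rcons.
split=> // i Hi; rewrite nth_rcons; case: ltngtP => Hit.
- exact: eq_tu.
- by move: Hi; rewrite ltnS leqNgt Hit.
- by rewrite Hit.
Qed.

Lemma prefix_cat2 (a x y : str) : prefix x y -> prefix (a ++ x) (a ++ y).
Proof. by move/prefixP=> [w ->]; rewrite catA prefix_prefix. Qed.

Lemma prefix_cat_drop (s t : str) : prefix s t -> t = s ++ drop (size s) t.
Proof. by rewrite prefixE => /eqP {1}<-; rewrite cat_take_drop. Qed.

Lemma nth_cat_size (r x : str) : nth false (r ++ x) (size r) = nth false x 0.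
Proof. by rewrite nth_cat ltnn subnn. Qed.

Lemma size_sdot s t : size (sdot s t) = size t.
Proof. by rewrite /sdot size_mkseq. Qed.

Lemma nth_sdot s t i : i < size t ->
  nth false (sdot s t) i = nth false t i (+) nth false s i.
Proof. by move=> Hi; rewrite /sdot nth_mkseq. Qed.

Lemma sdotK s : involutive (sdot s).
Proof.
move=> t; apply: (eq_from_nth (x0 := false)); rewrite !size_sdot // => i Hi.
by rewrite !nth_sdot ?size_sdot // addbK.
Qed.

Lemma sdot_translate a b : size a = size b -> sdot (sdot a b) a = b.
Proof.
move=> Eab; apply: (eq_from_nth (x0 := false)); rewrite !size_sdot // => i Hi.
by rewrite !nth_sdot -?Eab ?size_sdot -?Eab // addbC addbK.
Qed.

Lemma sdot_cat s a b : size s <= size a -> sdot s (a ++ b) = sdot s a ++ b.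
Proof.
move=> le_sa; apply: (eq_from_nth (x0 := false)).
  by rewrite size_sdot !size_cat size_sdot.
rewrite size_sdot => i Hi; rewrite nth_sdot // !nth_cat size_sdot.
case: ltnP => Hia; first by rewrite nth_sdot.
by rewrite (nth_default false (leq_trans le_sa Hia)) addbF.
Qed.

Lemma prefix_sdot s t u : prefix t u -> prefix (sdot s t) (sdot s u).
Proof.
move=> /prefix_nthP [le_tu eq_tu]; apply/prefix_nthP; rewrite !size_sdot.
split=> // i Hi; rewrite !nth_sdot ?eq_tu //; exact: leq_trans Hi le_tu.
Qed.

Definition qsel (q0 q1 : nat -> str) (b : bool) k := if b then q1 k else q0 k.

(* [blocks q0 q1 i m] of the definitions is [bstr q0 q1 i m.+1]. *)
Definition bstr q0 q1 (i : nat -> bool) m :=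
  flatten (mkseq (fun k => qsel q0 q1 (i k) k) m).

Definition shiftq n (q : nat -> str) k := q (n + k).

Definition branch q0 q1 (s : str) := bstr q0 q1 (fun k => nth false s k) (size s).

Lemma bstrS q0 q1 i m : bstr q0 q1 i m.+1 = bstr q0 q1 i m ++ qsel q0 q1 (i m) m.
Proof. by rewrite /bstr mkseqS flatten_rcons. Qed.

Lemma eq_bstr q0 q1 q0' q1' i j m :
  (forall k, k < m -> qsel q0 q1 (i k) k = qsel q0' q1' (j k) k) ->
  bstr q0 q1 i m = bstr q0' q1' j m.
Proof.
elim: m => [|m IHm] eq_ij //; rewrite !bstrS IHm ?eq_ij // => k Hk.
by apply: eq_ij; apply: ltnW.
Qed.

Lemma qsel_shift n q0 q1 b k : qsel (shiftq n q0) (shiftq n q1) b k = qsel q0 q1 b (n + k).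
Proof. by case: b. Qed.

Lemma bstrD q0 q1 i m k : bstr q0 q1 i (m + k) =
  bstr q0 q1 i m ++ bstr (shiftq m q0) (shiftq m q1) (fun j => i (m + j)) k.
Proof.
elim: k => [|k IHk]; first by rewrite addn0 cats0.
by rewrite addnS !bstrS IHk catA qsel_shift.
Qed.

Lemma bstr_cons q0 q1 i m : bstr q0 q1 i m.+1 =
  qsel q0 q1 (i 0) 0 ++ bstr (shiftq 1 q0) (shiftq 1 q1) (fun k => i k.+1) m.
Proof. by rewrite -add1n bstrD /bstr /= cats0. Qed.

Lemma prefix_bstr q0 q1 i m m' : m <= m' -> prefix (bstr q0 q1 i m) (bstr q0 q1 i m').
Proof. by move/subnKC <-; rewrite bstrD prefix_prefix. Qed.

Section ValidCodes.

Variables q0 q1 : nat -> str.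
Hypothesis valid_q01 : valid_q q0 q1.

Lemma size_qsel b k : size (qsel q0 q1 b k) = size (q0 k).
Proof. by case: b => //=; case: (valid_q01 k). Qed.

Lemma size_qsel_gt0 b k : 0 < size (qsel q0 q1 b k).
Proof. by rewrite size_qsel; case: (valid_q01 k) => _ []. Qed.

Lemma nth_qsel0 b k : nth false (qsel q0 q1 b k) 0 = b.
Proof.
case: (valid_q01 k) => Eq [gt0_q [q0_0 q1_0]]; case: b => //=.
by rewrite (set_nth_default true) // -Eq.
Qed.

Lemma prefix_qsel b k : prefix [:: b] (qsel q0 q1 b k).
Proof. by apply/prefix_nthP; split=> [|[] // _]; rewrite ?size_qsel_gt0 ?nth_qsel0. Qed.

Lemma size_bstr i j m : size (bstr q0 q1 i m) = size (bstr q0 q1 j m).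
Proof. by elim: m => // m IHm; rewrite !bstrS !size_cat IHm !size_qsel. Qed.

Lemma leq_size_bstr i m : m <= size (bstr q0 q1 i m).
Proof.
elim: m => // m IHm; rewrite bstrS size_cat -addn1.
by apply: leq_add => //; apply: size_qsel_gt0.
Qed.

Lemma size_branch s s' : size s = size s' ->
  size (branch q0 q1 s) = size (branch q0 q1 s').
Proof. by move=> Es; rewrite /branch Es; apply: size_bstr. Qed.

Lemma leq_size_branch s : size s <= size (branch q0 q1 s).
Proof. exact: leq_size_bstr. Qed.

Lemma valid_shiftq n : valid_q (shiftq n q0) (shiftq n q1).
Proof. by move=> k; apply: valid_q01. Qed.

End ValidCodes.

Lemma branch_cons q0 q1 b s :
  branch q0 q1 (b :: s) = qsel q0 q1 b 0 ++ branch (shiftq 1 q0) (shiftq 1 q1) s.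
Proof. by rewrite /branch /= bstr_cons. Qed.

Lemma branch_rcons q0 q1 s b :
  branch q0 q1 (rcons s b) = branch q0 q1 s ++ qsel q0 q1 b (size s).
Proof.
rewrite /branch size_rcons bstrS nth_rcons ltnn eqxx; congr (_ ++ _).
by apply: eq_bstr => k Hk; rewrite nth_rcons Hk.
Qed.

Lemma branch_mkseq q0 q1 i n : branch q0 q1 (mkseq i n) = bstr q0 q1 i n.
Proof. by rewrite /branch size_mkseq; apply: eq_bstr => k Hk; rewrite nth_mkseq. Qed.

Lemma shiftq0 (q : nat -> str) : shiftq 0 q = q.
Proof. exact: functional_extensionality. Qed.

Lemma shiftq_shift1 n (q : nat -> str) : shiftq n (shiftq 1 q) = shiftq n.+1 q.
Proof. by apply: functional_extensionality => k; rewrite /shiftq add1n addSn. Qed.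

Definition ltree r q0 q1 : tree := fun t => exists i m, prefix t (r ++ bstr q0 q1 i m).

Lemma tree_ext (S T : tree) : (forall t, S t <-> T t) -> S = T.
Proof.
move=> eqST; apply: functional_extensionality => t.
exact: propositional_extensionality.
Qed.

Lemma ltree_prefix_closed r q0 q1 s t : ltree r q0 q1 t -> prefix s t -> ltree r q0 q1 s.
Proof. by move=> [i [m Ht]] Hst; exists i, m; apply: prefix_trans Hst Ht. Qed.

Lemma prefix_bstr_mono r q0 q1 i m m' t : prefix t (r ++ bstr q0 q1 i m) -> m <= m' ->
  prefix t (r ++ bstr q0 q1 i m').
Proof. by move=> Ht /(prefix_bstr q0 q1 i)/(prefix_cat2 r); apply: prefix_trans. Qed.

Lemma ltree_comparable r q0 q1 t : ltree r q0 q1 t -> comparable r t.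
Proof. by move=> [i [m Ht]]; apply: prefix_comparable Ht; apply: prefix_prefix. Qed.

Lemma ltreeE r q0 q1 t :
  ltree r q0 q1 t <-> exists m i, prefix t (r ++ blocks q0 q1 i m).
Proof.
split=> [[i [m Ht]] | [m [i Ht]]]; last by exists i, m.+1.
by exists m, i; apply: prefix_bstr_mono Ht (leqnSn m).
Qed.

Section CanonicalLargeTree.

Variables (r : str) (q0 q1 : nat -> str).
Hypothesis valid_q01 : valid_q q0 q1.

Lemma ltree_qsel c : ltree r q0 q1 (r ++ qsel q0 q1 c 0).
Proof. by exists (fun _ => c), 1; rewrite /bstr /= cats0 prefix_refl. Qed.

Lemma ltree_rcons_stem c : ltree r q0 q1 (rcons r c).
Proof.
apply: ltree_prefix_closed (ltree_qsel c) _; rewrite -cats1.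
exact/prefix_cat2/prefix_qsel.
Qed.

Lemma ltree_perfect : perfect_tree (ltree r q0 q1).
Proof.
split; [split|split].
- by exists [::], (fun _ => false), 0; apply: prefix0s.
- by move=> s t Ht Hst; apply: ltree_prefix_closed Ht Hst.
- move=> t [i [m Ht]]; set u := r ++ bstr q0 q1 i m.+1.
  have lt_tu : size t < size u.
    apply: leq_ltn_trans (size_prefix Ht) _.
    by rewrite /u bstrS catA [X in _ < X]size_cat -[X in X < _]addn0 ltn_add2l size_qsel_gt0.
  exists (nth false u (size t)), i, m.+1.
  exact: prefix_rcons_nth (prefix_bstr_mono Ht (leqnSn m)) lt_tu.
- move=> t [i [m Ht]]; exists (r ++ bstr q0 q1 i m); split=> //.
  have branches c : ltree r q0 q1 (rcons (r ++ bstr q0 q1 i m) c).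
    exists (fun k => if k == m then c else i k), m.+1.
    rewrite bstrS eqxx (@eq_bstr q0 q1 q0 q1 _ i); last by move=> k /ltn_eqF ->.
    by rewrite -cats1 -catA; apply/prefix_cat2/prefix_cat2/prefix_qsel.
  by split; apply: branches.
Qed.

Lemma ltree_stem : is_stem (ltree r q0 q1) r.
Proof.
split; first by exists (fun _ => false), 0; rewrite cats0 prefix_refl.
split=> [t|s Hs comp_s]; first exact: ltree_comparable.
case: (leqP (size s) (size r)) => Hsr.
  by apply: comparable_prefix Hsr; apply/comparable_sym/(ltree_comparable Hs).
have branch_bit c : nth false s (size r) = c.
  rewrite (comparable_nth (comp_s _ (ltree_qsel c))) //.
    by rewrite nth_cat_size nth_qsel0.
  by rewrite size_cat -[X in X < _]addn0 ltn_add2l size_qsel_gt0.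
by have := branch_bit true; rewrite (branch_bit false).
Qed.

Lemma ltree_rep : LT_rep (ltree r q0 q1) r q0 q1.
Proof.
split; first exact: ltree_perfect.
by split; [exact: ltree_stem | split=> // t; apply: ltreeE].
Qed.

Lemma ltree_LT : LT (ltree r q0 q1).
Proof. by exists r, q0, q1; apply: ltree_rep. Qed.

End CanonicalLargeTree.

Lemma LT_ltree T : LT T -> exists r q0 q1, valid_q q0 q1 /\ T = ltree r q0 q1.
Proof.
move=> [r [q0 [q1 [_ [_ [valid_q01 Trep]]]]]]; exists r, q0, q1; split=> //.
by apply: tree_ext => t; rewrite Trep ltreeE.
Qed.

Lemma stem_unique T r r' : is_stem T r -> is_stem T r' -> r = r'.
Proof. by move=> [Tr [compr maxr]] [Tr' [compr' maxr']]; apply: prefix_anti; auto. Qed.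

Lemma to1_restr T r b : is_stem T r -> to1 T b = restr T (rcons r b).
Proof.
move=> stem_r; apply: tree_ext => t; split=> [[Tt [r' [stem_r' comp_t]]] | [Tt comp_t]].
  by rewrite (stem_unique stem_r stem_r').
by split=> //; exists r.
Qed.

Lemma to1_ltree r q0 q1 b : valid_q q0 q1 ->
  to1 (ltree r q0 q1) b = ltree (r ++ qsel q0 q1 b 0) (shiftq 1 q0) (shiftq 1 q1).
Proof.
move=> valid_q01; rewrite (to1_restr b (ltree_stem r valid_q01)).
apply: tree_ext => t; split=> [[[i [m Ht]] comp_t] | [j [m Ht]]]; last first.
  split.
    by exists (fun k => if k is k'.+1 then j k' else b), m.+1; rewrite bstr_cons catA.
  apply: prefix_comparable Ht; rewrite -cats1 -catA.
  exact/prefix_cat2/prefix_catl/prefix_qsel.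
case: (leqP (size t) (size r)) => Htr.
  exists i, 0; rewrite -catA; apply/prefix_catl/comparable_prefix/Htr.
  by apply: prefix_comparable Ht (prefix_prefix _ _).
case: m Ht => [|m] Ht; first by move: (size_prefix Ht); rewrite cats0 leqNgt Htr.
rewrite bstr_cons in Ht.
have i0 : i 0 = b.
  have /prefix_nthP [_ /(_ _ Htr)] := Ht.
  rewrite nth_cat_size nth_cat size_qsel_gt0 // nth_qsel0 // => <-.
  by rewrite -(comparable_nth comp_t) ?size_rcons // nth_rcons ltnn eqxx.
by exists (fun k => i k.+1), m; rewrite -catA -i0.
Qed.

Lemma to_ltree r q0 q1 s : valid_q q0 q1 ->
  to (ltree r q0 q1) s = ltree (r ++ branch q0 q1 s) (shiftq (size s) q0) (shiftq (size s) q1).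
Proof.
elim: s r q0 q1 => [|b s IHs] r q0 q1 valid_q01; first by rewrite cats0 !shiftq0.
rewrite /to /= -/(to _ s) to1_ltree // IHs; last exact: valid_shiftq.
by rewrite branch_cons catA !shiftq_shift1.
Qed.

Lemma to_subtree T s : subtree (to T s) T.
Proof. by elim: s T => [|b s IHs] T t // /IHs []. Qed.

Lemma ltree_in_cone r q0 q1 n t : valid_q q0 q1 -> ltree r q0 q1 t ->
  exists s, size s = n /\ to (ltree r q0 q1) s t.
Proof.
move=> valid_q01 [i [m Ht]]; exists (mkseq i n); rewrite size_mkseq; split=> //.
rewrite to_ltree // size_mkseq branch_mkseq.
exists (fun j => i (n + j)), m; rewrite -catA -bstrD.
exact: prefix_bstr_mono Ht (leq_addl n m).
Qed.

Lemma subtree_of_cones n r q0 q1 r' q0' q1' : valid_q q0' q1' ->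
  (forall s, size s = n -> subtree (to (ltree r' q0' q1') s) (to (ltree r q0 q1) s)) ->
  subtree (ltree r' q0' q1') (ltree r q0 q1).
Proof.
move=> valid_q01' sub_cones t Ht; have [s [Hs Ht']] := ltree_in_cone n valid_q01' Ht.
exact: to_subtree (sub_cones s Hs t Ht').
Qed.

Lemma sdotT_mono s S T : subtree S T -> subtree (sdotT s S) (sdotT s T).
Proof. by move=> subST _ [t [St ->]]; exists t; split=> //; apply: subST. Qed.

Lemma sdotT_ltree s a p0 p1 : size s <= size a ->
  sdotT s (ltree a p0 p1) = ltree (sdot s a) p0 p1.
Proof.
move=> le_sa; apply: tree_ext => u; split=> [[t [[i [m Ht]] ->]] | [i [m Hu]]].
  by exists i, m; rewrite -sdot_cat //; apply: prefix_sdot.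
exists (sdot s u); rewrite sdotK; split=> //; exists i, m.
have -> : a ++ bstr p0 p1 i m = sdot s (sdot s a ++ bstr p0 p1 i m).
  by rewrite sdot_cat ?size_sdot // sdotK.
exact: prefix_sdot.
Qed.

Lemma sdotT_ltree_stem a b e p0 p1 : size a = size b ->
  sdotT (sdot a b) (ltree (a ++ e) p0 p1) = ltree (b ++ e) p0 p1.
Proof.
move=> Eab; rewrite sdotT_ltree; last by rewrite size_sdot size_cat -Eab leq_addr.
by rewrite sdot_cat ?size_sdot -?Eab // sdot_translate.
Qed.

Lemma to_ltree_translate r q0 q1 u u' : valid_q q0 q1 -> size u = size u' ->
  to (ltree r q0 q1) u' =
  sdotT (sdot (r ++ branch q0 q1 u) (r ++ branch q0 q1 u')) (to (ltree r q0 q1) u).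
Proof.
move=> valid_q01 Eu; rewrite !to_ltree // Eu.
have Estem : size (r ++ branch q0 q1 u) = size (r ++ branch q0 q1 u').
  by rewrite !size_cat (size_branch valid_q01 Eu).
by rewrite sdotT_ltree ?sdot_translate // size_sdot Estem.
Qed.

Lemma to_translate T s s' : LT T -> size s = size s' ->
  exists sigma, to T s' = sdotT sigma (to T s).
Proof.
move=> /LT_ltree [r [q0 [q1 [valid_q01 ->]]]] Es.
by eexists; apply: to_ltree_translate.
Qed.

Lemma ltree_subtree_stem a p0 p1 b q0 q1 : valid_q p0 p1 ->
  subtree (ltree a p0 p1) (ltree b q0 q1) -> prefix b a.
Proof.
move=> valid_p01 sub_ab.
have comp_b c : comparable b (rcons a c).
  exact/ltree_comparable/sub_ab/ltree_rcons_stem.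
case: (ltnP (size a) (size b)) => Hab.
  have branch_bit c : nth false b (size a) = c.
    by rewrite (comparable_nth (comp_b c)) ?size_rcons // nth_rcons ltnn eqxx.
  by have := branch_bit true; rewrite (branch_bit false).
have /prefix_nthP [_ eq_ba] : prefix b (rcons a false).
  by apply: comparable_prefix (comp_b false) _; rewrite size_rcons leqW.
apply/prefix_nthP; split=> // i Hi; rewrite eq_ba // nth_rcons.
by rewrite (leq_trans Hi Hab).
Qed.

Definition glue m (q : nat -> str) (z : str) (p : nat -> str) : nat -> str :=
  fun j => if j < m then q j else if j == m then q m ++ z else p (j - m.+1).

Lemma glue_valid m q0 q1 z0 z1 p0 p1 : valid_q q0 q1 -> valid_q p0 p1 ->
  size z0 = size z1 -> valid_q (glue m q0 z0 p0) (glue m q1 z1 p1).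
Proof.
move=> valid_q01 valid_p01 Ez j; rewrite /glue; case: ltnP => _; first exact: valid_q01.
case: eqP => _; last exact: valid_p01.
case: (valid_q01 m) => Eq [gt0_q [q0_0 q1_0]].
by rewrite !size_cat Eq Ez !nth_cat -Eq gt0_q (leq_trans gt0_q) ?leq_addr.
Qed.

Lemma to_glue r m q0 q1 (z : bool -> str) p0 p1 u c :
  valid_q q0 q1 -> valid_q p0 p1 -> size (z false) = size (z true) -> size u = m ->
  to (ltree r (glue m q0 (z false) p0) (glue m q1 (z true) p1)) (rcons u c) =
  ltree (r ++ branch q0 q1 (rcons u c) ++ z c) p0 p1.
Proof.
move=> valid_q01 valid_p01 Ez Hu; rewrite to_ltree; last exact: glue_valid.
have shift_glue q z' p : shiftq (size (rcons u c)) (glue m q z' p) = p.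
  apply: functional_extensionality => k; rewrite /shiftq /glue size_rcons Hu.
  have m_lt : m < m.+1 + k by rewrite addSn ltnS leq_addr.
  by rewrite ltnNge ltnW // (gtn_eqF m_lt) addKn.
rewrite !shift_glue {shift_glue}; congr (ltree _ _ _).
have branch_glue : branch (glue m q0 (z false) p0) (glue m q1 (z true) p1) u = branch q0 q1 u.
  by rewrite /branch Hu; apply: eq_bstr => k Hk; case: (nth false u k); rewrite /qsel /glue Hk.
have qsel_glue :
    qsel (glue m q0 (z false) p0) (glue m q1 (z true) p1) c m = qsel q0 q1 c m ++ z c.
  by case: c; rewrite /qsel /glue ltnn eqxx.
by rewrite !branch_rcons branch_glue Hu qsel_glue !catA.
Qed.

Definition spl_level (r : str) (q0 : nat -> str) k :=
  size r + sumn [seq size (q0 j) | j <- iota 0 k].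

Lemma spl_level_glue m r q0 z p k : k <= m -> spl_level r (glue m q0 z p) k = spl_level r q0 k.
Proof.
move=> Hk; congr (_ + sumn _); apply/eq_in_map => j; rewrite mem_iota add0n => Hj.
by rewrite /glue (leq_trans Hj Hk).
Qed.

(* A transitive strengthening of [sub_n n] on representations; transitivity of
   [sub_n] itself would need the uniqueness of the splitting levels. *)
Definition refines n r q0 q1 r' q0' q1' : Prop :=
  [/\ valid_q q0' q1',
      forall k, k < n -> spl_level r' q0' k = spl_level r q0 k &
      forall s, size s = n -> subtree (to (ltree r' q0' q1') s) (to (ltree r q0 q1) s)].

Lemma refines_refl n r q0 q1 : valid_q q0 q1 -> refines n r q0 q1 r q0 q1.
Proof. by move=> valid_q01; split=> // s _ t. Qed.

Lemma refines_trans n r q0 q1 r' q0' q1' r'' q0'' q1'' :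
  refines n r q0 q1 r' q0' q1' -> refines n r' q0' q1' r'' q0'' q1'' ->
  refines n r q0 q1 r'' q0'' q1''.
Proof.
move=> [_ spl' sub'] [valid'' spl'' sub'']; split=> // [k Hk | s Hs t Ht].
  by rewrite spl'' // spl'.
by apply: sub' => //; apply: sub''.
Qed.

Lemma refines_sub_n n r q0 q1 r' q0' q1' : valid_q q0 q1 ->
  refines n r q0 q1 r' q0' q1' -> sub_n n (ltree r' q0' q1') (ltree r q0 q1).
Proof.
move=> valid_q01 [valid_q01' spl' sub_cones].
split=> [|k Hk]; first exact: subtree_of_cones sub_cones.
exists (spl_level r q0 k); split; last by exists r, q0, q1; split=> //; apply: ltree_rep.
by exists r', q0', q1'; split; [apply: ltree_rep | rewrite -spl'].
Qed.

Lemma amalgamate m r q0 q1 (a w : bool -> str) p0 p1 :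
  valid_q q0 q1 -> valid_q p0 p1 -> size (a false) = size (a true) ->
  (forall c, size (w c) = m) ->
  (forall c, subtree (ltree (a c) p0 p1) (to (ltree r q0 q1) (rcons (w c) c))) ->
  exists q0' q1', refines m.+1 r q0 q1 r q0' q1' /\
    (forall u c, size u = m -> exists sigma,
       to (ltree r q0' q1') (rcons u c) = sdotT sigma (ltree (a c) p0 p1)) /\
    (forall c, to (ltree r q0' q1') (rcons (w c) c) = ltree (a c) p0 p1).
Proof.
move=> valid_q01 valid_p01 Ea Ew sub_a.
pose x u c := r ++ branch q0 q1 (rcons u c).
have size_x u c u' c' : size u = m -> size u' = m -> size (x u c) = size (x u' c').
  move=> Hu Hu'; rewrite !size_cat (@size_branch q0 q1 _ _ (rcons u' c')) //.
  by rewrite !size_rcons Hu Hu'.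
pose z c := drop (size (x (w c) c)) (a c).
have Ea_z c : a c = x (w c) c ++ z c.
  apply: prefix_cat_drop; have := sub_a c; rewrite to_ltree //.
  exact: ltree_subtree_stem.
have Ez : size (z false) = size (z true).
  apply/eqP; rewrite -(eqn_add2l (size (x (w false) false))).
  by rewrite {2}(size_x _ false (w true) true) // -!size_cat -!Ea_z Ea.
exists (glue m q0 (z false) p0), (glue m q1 (z true) p1).
have cone_Q u c : size u = m ->
    to (ltree r (glue m q0 (z false) p0) (glue m q1 (z true) p1)) (rcons u c) =
    sdotT (sdot (x (w c) c) (x u c)) (ltree (a c) p0 p1).
  by move=> Hu; rewrite to_glue // catA {1}Ea_z sdotT_ltree_stem // (size_x _ _ u c).
split; [split | split].
- exact: glue_valid.
- by move=> k Hk; rewrite spl_level_glue.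
- case/lastP=> [|u c] //; rewrite size_rcons => -[Hu].
  have Ewu : size (rcons (w c) c) = size (rcons u c) by rewrite !size_rcons Ew Hu.
  rewrite cone_Q // (to_ltree_translate _ valid_q01 Ewu).
  exact: sdotT_mono.
- by move=> u c Hu; eexists; apply: cone_Q.
- by move=> c; rewrite to_glue // catA -Ea_z.
Qed.

Section LargeTreeForcing.

Variable PP : tree -> Prop.
Hypothesis LTF_PP : LTF PP.

Lemma LTF_sdotT s T : PP T -> PP (sdotT s T).
Proof. exact: LTF_PP.2.2. Qed.

Lemma LTF_to T s : PP T -> PP (to T s).
Proof.
elim: s T => [|b s IHs] T PT //; apply: IHs.
have [r [q0 [q1 [valid_q01 ET]]]] := LT_ltree (LTF_PP.1 _ PT).
rewrite ET in PT *; rewrite (to1_restr b (ltree_stem r valid_q01)).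
exact: LTF_PP.2.1 _ _ PT (ltree_rcons_stem _ valid_q01 b).
Qed.

Lemma cone_in_iff_LC n T s0 : LT T -> size s0 = n -> PP (to T s0) <-> LC n PP T.
Proof.
move=> LT_T Es0; split=> [PP_s0 | [_]]; last exact.
split=> // s Es; have [sigma ->] := to_translate LT_T (etrans Es0 (esym Es)).
exact: LTF_sdotT.
Qed.

Lemma LTF_cones_rcons m Q (X : bool -> tree) :
  (forall c, PP (X c)) ->
  (forall u c, size u = m -> exists sigma, to Q (rcons u c) = sdotT sigma (X c)) ->
  forall s, size s = m.+1 -> PP (to Q s).
Proof.
move=> PP_X translates; case/lastP=> [|u c] //; rewrite size_rcons => -[Hu].
by have [sigma ->] := translates u c Hu; apply: LTF_sdotT.
Qed.

Lemma LTF_long_stem S k : PP S -> exists a p0 p1,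
  [/\ valid_q p0 p1, k <= size a, PP (ltree a p0 p1) & subtree (ltree a p0 p1) S].
Proof.
move=> PS; have [rS [p0 [p1 [valid_p01 ES]]]] := LT_ltree (LTF_PP.1 _ PS).
have cone_S : to S (nseq k false) =
    ltree (rS ++ branch p0 p1 (nseq k false)) (shiftq k p0) (shiftq k p1).
  by rewrite ES to_ltree // size_nseq.
exists (rS ++ branch p0 p1 (nseq k false)), (shiftq k p0), (shiftq k p1).
rewrite -cone_S; split.
- exact: valid_shiftq.
- rewrite size_cat (leq_trans _ (leq_addl _ _)) //.
  by rewrite -{1}(size_nseq k false) leq_size_branch.
- exact: LTF_to.
- exact: to_subtree.
Qed.

Lemma LC_sub_n_of_refines n r q0 q1 r' q0' q1' : valid_q q0 q1 ->
  refines n r q0 q1 r' q0' q1' -> (forall s, size s = n -> PP (to (ltree r' q0' q1') s)) ->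
  LC n PP (ltree r' q0' q1') /\ sub_n n (ltree r' q0' q1') (ltree r q0 q1).
Proof.
move=> valid_q01 ref PP_cones; split; last exact: refines_sub_n.
by split=> //; case: ref => valid_q01' _ _; apply: ltree_LT.
Qed.

Lemma refine_cone n r q0 q1 S s0 : valid_q q0 q1 -> size s0 = n -> PP S ->
  subtree S (to (ltree r q0 q1) s0) ->
  exists r' q0' q1', [/\ refines n r q0 q1 r' q0' q1',
    forall s, size s = n -> PP (to (ltree r' q0' q1') s) & to (ltree r' q0' q1') s0 = S].
Proof.
move=> valid_q01 Es0 PS sub_S.
have [rS [p0 [p1 [valid_p01 ES]]]] := LT_ltree (LTF_PP.1 _ PS); subst S.
case: n Es0 => [|m] Es0.
  rewrite (size0nil Es0) in sub_S *; exists rS, p0, p1.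
  by split=> [|s /size0nil ->|] //; split=> // s /size0nil -> //.
case/lastP: s0 Es0 sub_S => [|s b] //; rewrite size_rcons => -[Hs] sub_S.
pose x c := r ++ branch q0 q1 (rcons s c).
have stem_S : prefix (x b) rS.
  by move: sub_S; rewrite to_ltree //; apply: ltree_subtree_stem.
pose a c := x c ++ drop (size (x b)) rS.
have size_x c : size (x c) = size (x b).
  by rewrite !size_cat (@size_branch q0 q1 _ _ (rcons s b)) // !size_rcons.
have translate_a c : ltree (a c) p0 p1 = sdotT (sdot (x b) (x c)) (ltree rS p0 p1).
  by rewrite [in RHS](prefix_cat_drop stem_S) sdotT_ltree_stem ?size_x.
have sub_a c : subtree (ltree (a c) p0 p1) (to (ltree r q0 q1) (rcons s c)).
  rewrite translate_a (to_ltree_translate _ valid_q01 (_ : size (rcons s b) = _)).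
    exact: sdotT_mono.
  by rewrite !size_rcons.
have [|q0' [q1' [ref [translates cone_s]]]] :=
  @amalgamate m r q0 q1 a (fun _ => s) p0 p1 valid_q01 valid_p01 _ (fun _ => Hs) sub_a.
  by rewrite /a !(size_cat (x _)) !size_x.
exists r, q0', q1'; split=> //.
  by apply: LTF_cones_rcons translates => c; rewrite translate_a; apply: LTF_sdotT.
by rewrite cone_s /a -prefix_cat_drop.
Qed.

Lemma refine_cones_dense D n r q0 q1 : open_dense PP D -> valid_q q0 q1 ->
  (forall s, size s = n -> PP (to (ltree r q0 q1) s)) ->
  exists r' q0' q1', [/\ refines n r q0 q1 r' q0' q1',
    forall s, size s = n -> PP (to (ltree r' q0' q1') s) &
    forall s, size s = n -> D (to (ltree r' q0' q1') s)].
Proof.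
move=> [D_PP [D_open D_dense]] valid_q01 PP_cones.
suff [r' [q0' [q1' [ref PP_cones' D_cones]]]] : exists r' q0' q1',
    [/\ refines n r q0 q1 r' q0' q1', forall s, size s = n -> PP (to (ltree r' q0' q1') s) &
        forall x : n.-tuple bool, x \in enum {: n.-tuple bool} -> D (to (ltree r' q0' q1') x)].
  exists r', q0', q1'; split=> // s Hs.
  by have := D_cones (Tuple (introT eqP Hs)); rewrite mem_enum; apply.
elim: (enum _) => [|x L [r1 [q01 [q11 [ref1 PP1 D1]]]]].
  by exists r, q0, q1; split=> //; apply: refines_refl.
have [S [DS sub_S]] := D_dense _ (PP1 x (size_tuple x)).
have [valid_q011 _ _] := ref1.
have [r2 [q02 [q12 [ref2 PP2 cone_x]]]] :=
  refine_cone valid_q011 (size_tuple x) (D_PP _ DS) sub_S.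
exists r2, q02, q12; split=> //; first exact: refines_trans ref1 ref2.
move=> y; rewrite inE => /predU1P [-> | yL]; first by rewrite cone_x.
case: ref2 => _ _ sub_cones.
exact: D_open (D1 y yL) (PP2 y (size_tuple y)) (sub_cones y (size_tuple y)).
Qed.

Lemma LC_shrink_cone n P S s0 : LC n PP P -> size s0 = n -> PP S ->
  subtree S (to P s0) -> exists Q, LC n PP Q /\ sub_n n Q P /\ to Q s0 = S.
Proof.
move=> [/LT_ltree [r [q0 [q1 [valid_q01 ->]]]] _] Es0 PS sub_S.
have [r' [q0' [q1' [ref PP_cones cone_s0]]]] := refine_cone valid_q01 Es0 PS sub_S.
have [LC_Q sub_Q] := LC_sub_n_of_refines valid_q01 ref PP_cones.
by exists (ltree r' q0' q1').
Qed.

Lemma LC_shrink_dense n P D : LC n PP P -> open_dense PP D ->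
  exists Q, LC n PP Q /\ sub_n n Q P /\ forall s, size s = n -> D (to Q s).
Proof.
move=> [/LT_ltree [r [q0 [q1 [valid_q01 ->]]]] PP_cones] dense_D.
have [r' [q0' [q1' [ref PP_cones' D_cones]]]] := refine_cones_dense dense_D valid_q01 PP_cones.
have [LC_Q sub_Q] := LC_sub_n_of_refines valid_q01 ref PP_cones'.
by exists (ltree r' q0' q1').
Qed.

Lemma LC_succ_translates n P S sigma s t : LC n PP P -> PP S ->
  size s = n -> size t = n ->
  subtree S (to P (rcons s false)) -> subtree (sdotT sigma S) (to P (rcons t true)) ->
  exists Q, LC n.+1 PP Q /\ sub_n n.+1 Q P /\
    subtree (to Q (rcons s false)) S /\ subtree (to Q (rcons t true)) (sdotT sigma S).
Proof.
move=> [/LT_ltree [r [q0 [q1 [valid_q01 ->]]]] _] PS Es Et sub_S sub_T.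
have [a [p0 [p1 [valid_p01 le_sigma PA sub_A]]]] := LTF_long_stem (size sigma) PS.
have translate_A := sdotT_ltree p0 p1 le_sigma.
pose A c := if c then sdot sigma a else a.
have PP_A c : PP (ltree (A c) p0 p1).
  by case: c => //=; rewrite -translate_A; apply: LTF_sdotT.
have sub_A_cone c : subtree (ltree (A c) p0 p1)
    (to (ltree r q0 q1) (rcons (if c then t else s) c)).
  case: c => /= u Au; last exact/sub_S/sub_A.
  by apply/sub_T/(sdotT_mono sub_A); rewrite translate_A.
have [||q0' [q1' [ref [translates cone_A]]]] :=
  @amalgamate n r q0 q1 A (fun c => if c then t else s) p0 p1
    valid_q01 valid_p01 _ _ sub_A_cone.
- by rewrite size_sdot.
- by case.
have [LC_Q sub_Q] := LC_sub_n_of_refines valid_q01 ref (LTF_cones_rcons PP_A translates).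
exists (ltree r q0' q1'); do !split=> //.
  by rewrite (cone_A false).
by rewrite (cone_A true) /= -translate_A; apply: sdotT_mono.
Qed.

End LargeTreeForcing.

Theorem lemma4p1 (PP : tree -> Prop) (n : nat) : LTF PP ->
  (forall (T : tree) (s0 : str), LT T -> size s0 = n ->
     (PP (to T s0) <-> LC n PP T)) /\
  (forall (P S : tree) (s0 : str), LC n PP P -> size s0 = n -> PP S ->
     subtree S (to P s0) ->
     exists Q, LC n PP Q /\ sub_n n Q P /\ to Q s0 = S) /\
  (forall (P : tree) (D : tree -> Prop), LC n PP P -> open_dense PP D ->
     exists Q, LC n PP Q /\ sub_n n Q P /\
       forall s : str, size s = n -> D (to Q s)) /\
  (forall (P S T : tree) (s t sigma : str), LC n PP P -> PP S -> PP T ->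
     size s = n -> size t = n ->
     subtree S (to P (rcons s false)) -> subtree T (to P (rcons t true)) ->
     T = sdotT sigma S ->
     exists Q, LC n.+1 PP Q /\ sub_n n.+1 Q P /\
       subtree (to Q (rcons s false)) S /\ subtree (to Q (rcons t true)) T).
Proof.
move=> LTF_PP; split; [|split; [|split]].
- exact: cone_in_iff_LC.
- exact: LC_shrink_cone.
- exact: LC_shrink_dense.
- by move=> P S T s t sigma LC_P PS _ Es Et sub_S sub_T ET; subst T; apply: LC_succ_translates.
Qed.
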